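(* Let $Y$ be an upwards skip-free Lévy chain with $h=1$, i.e. a compound Poisson process whose Lévy measure $\nu$ satisfies $\mathrm{supp}(\nu)\subset\mathbb Z$, $\mathrm{supp}(\nu|_{(0,\infty)})=\{1\}$ and $\nu(\{1\})>0$. Let $q\ge0$ and let $W^{(q)}$, $Z^{(q)}$ be its scale functions. Then for all $n\in\mathbb N\cup\{0\}$: $$W^{(q)}(n+1)=W^{(q)}(0)+\sum_{k=1}^{n+1}W^{(q)}(n+1-k)\frac{q+\nu((-\infty,-k])}{\nu(\{1\})},\qquad W^{(q)}(0)=\frac1{\nu(\{1\})},$$ and, with $\widetilde{Z^{(q)}}:=Z^{(q)}-1$, $$\widetilde{Z^{(q)}}(n+1)=(n+1)\frac{q}{\nu(\{1\})}+\sum_{k=1}^{n}\widetilde{Z^{(q)}}(n+1-k)\frac{q+\nu((-\infty,-k])}{\nu(\{1\})},\qquad \widetilde{Z^{(q)}}(0)=0.$$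
   Context: The Laplace exponent of $Y$ is $\varphi(\beta)=\int_{\mathbb R}(e^{\beta x}-1)\nu(dx)$, $\Re\beta\ge0$; $\varphi|_{[0,\infty)}$ is strictly convex with $\varphi(\beta)\to\infty$ as $\beta\to\infty$. Let $\Phi(q)$ be the largest root of $\varphi(\beta)=q$ in $[0,\infty)$. The scale function $W^{(q)}:\mathbb R\to[0,\infty)$ vanishes on $(-\infty,0)$ and on $[0,\infty)$ is the unique right-continuous, piecewise constant function of exponential order with $\int_0^\infty e^{-\beta x}W^{(q)}(x)dx=\frac{e^{\beta}-1}{\beta(\varphi(\beta)-q)}$ for $\beta>\Phi(q)$; and $Z^{(q)}(x)=1+q\int_0^{\lfloor x\rfloor}W^{(q)}(y)dy$, $x\in\mathbb R$. *)

From Stdlib Require Import Reals ZArith ClassicalEpsilon.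
Open Scope R_scope.

(* Total value of a real series (meaningful when it converges). *)
Definition Rsum (u : nat -> R) : R :=
  epsilon (inhabits 0) (fun l => infinite_sum u l).

(* Value of a Riemann integral int_a^b f (meaningful when integrable). *)
Definition Rint (f : R -> R) (a b : R) : R :=
  epsilon (inhabits 0)
    (fun v => exists pr : Riemann_integrable f a b, RiemannInt pr = v).

(* sum_{k=1}^{n} f k  (= 0 when n = 0) *)
Fixpoint sum_range (f : nat -> R) (n : nat) : R :=
  match n with
  | O => 0
  | S m => sum_range f m + f (S m)
  end.

(* Floor function: up x is the unique integer with x < up x <= x + 1. *)
Definition Rfloor (x : R) : R := IZR (up x - 1).

(* The Levy measure nu on Z is encoded by its point masses nu z = nu({z}).
   Upwards skip-free compound Poisson chain with h = 1: *)
Definition skip_free_levy (nu : Z -> R) : Prop :=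
  (forall z, 0 <= nu z) /\
  nu 0%Z = 0 /\
  (forall z, (2 <= z)%Z -> nu z = 0) /\
  0 < nu 1%Z /\
  (* finite total mass (compound Poisson) *)
  (exists s, infinite_sum (fun j => nu (- (Z.of_nat j + 1))%Z) s).

(* Laplace exponent phi(b) = int (e^{b x} - 1) nu(dx) *)
Definition laplace_exp (nu : Z -> R) (b : R) : R :=
  nu 1%Z * (exp b - 1)
  + Rsum (fun j => nu (- (Z.of_nat j + 1))%Z * (exp (- (INR j + 1) * b) - 1)).

Definition nu_tail (nu : Z -> R) (k : nat) : R :=
  Rsum (fun j => nu (- Z.of_nat (j + k))%Z).

Definition is_Phi (nu : Z -> R) (q p : R) : Prop :=
  0 <= p /\ laplace_exp nu p = q /\
  forall b, 0 <= b -> laplace_exp nu b = q -> b <= p.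

Definition improper_int_0_inf (f : R -> R) (l : R) : Prop :=
  (forall T, 0 <= T -> inhabited (Riemann_integrable f 0 T)) /\
  forall eps, eps > 0 -> exists M, forall T (pr : Riemann_integrable f 0 T),
      T >= M -> Rabs (RiemannInt pr - l) < eps.

Definition piecewise_const_rc (W : R -> R) : Prop :=
  (forall x, 0 <= x -> exists d, d > 0 /\
     forall y, x <= y < x + d -> W y = W x) /\
  (forall x, 0 < x -> exists d, d > 0 /\
     forall y z, x - d < y < x -> x - d < z < x -> W y = W z).

Definition exp_order (W : R -> R) : Prop :=
  exists C a, forall x, 0 <= x -> Rabs (W x) <= C * exp (a * x).

Definition is_scale_W (nu : Z -> R) (q : R) (W : R -> R) : Prop :=
  (forall x, x < 0 -> W x = 0) /\
  (forall x, 0 <= W x) /\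
  piecewise_const_rc W /\
  exp_order W /\
  forall p, is_Phi nu q p -> forall b, b > p ->
    improper_int_0_inf (fun x => exp (- b * x) * W x)
      ((exp b - 1) / (b * (laplace_exp nu b - q))).

Definition Zscale (q : R) (W : R -> R) (x : R) : R :=
  1 + q * Rint W 0 (Rfloor x).

(* Write c_k = (q + nu((-oo, -k])) / nu{1} and let w be the sequence given by
   the renewal-type recursion  w_n = 1/nu{1} + sum_{k=1}^n w_{n-k} c_k.
   The corollary says W^{(q)}(n) = w_n and, since Z^{(q)}(n) - 1 is q times
   the partial sums of w, the second recursion is the first one summed.
   The heart of the proof is therefore  W^{(q)} = w o floor  on [0, oo),
   obtained by comparing Laplace transforms:
   - the c_k are nonnegative and nonincreasing, so 0 <= w_n <= w_0 (1+c_1)^n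
     and, with C(s) = sum_k c_k s^k, the generating function satisfies
     (1 - s)(1 - C(s)) sum_n w_n s^n = w_0  (renewal_generating);
   - at s = e^{-b} one has nu{1} e^b (1 - s)(1 - C(s)) = phi(b) - q, where phi
     is the Laplace exponent written as a power series (denominator_phi);
   - the Laplace transform of x |-> a(floor x) is (1 - e^{-b})/b sum a_n e^{-bn}
     (step_laplace), so w o floor has the transform (e^b-1)/(b(phi(b)-q));
   - Phi(q) exists (Phi_exists), so the defining property of W^{(q)} applies,
     and a right-continuous piecewise constant function of exponential order
     with vanishing Laplace transform is zero (laplace_uniqueness). *)

From Stdlib Require Import Reals ZArith Lra Lia ClassicalEpsilon.
From Coquelicot Require Import Coquelicot.
Open Scope R_scope.

Lemma sum_range_ext_in (f g : nat -> R) (n : nat) :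
  (forall k, (1 <= k <= n)%nat -> f k = g k) -> sum_range f n = sum_range g n.
Proof.
  induction n as [|n IH]; intros hfg; simpl; [reflexivity|].
  rewrite IH by (intros; apply hfg; lia). rewrite hfg by lia. reflexivity.
Qed.

Lemma sum_range_shift (f : nat -> R) (n : nat) :
  sum_range f (S n) = f 1%nat + sum_range (fun k => f (S k)) n.
Proof. induction n as [|n IH]; simpl in *; [ring|rewrite IH; ring]. Qed.

Lemma sum_range_plus (f g : nat -> R) (n : nat) :
  sum_range (fun k => f k + g k) n = sum_range f n + sum_range g n.
Proof. induction n as [|n IH]; simpl; [ring|rewrite IH; ring]. Qed.

Lemma sum_range_minus (f g : nat -> R) (n : nat) :
  sum_range (fun k => f k - g k) n = sum_range f n - sum_range g n.
Proof. induction n as [|n IH]; simpl; [ring|rewrite IH; ring]. Qed.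

Lemma sum_range_scal (f : nat -> R) (a : R) (n : nat) :
  sum_range (fun k => a * f k) n = a * sum_range f n.
Proof. induction n as [|n IH]; simpl; [ring|rewrite IH; ring]. Qed.

Lemma sum_range_nonneg (f : nat -> R) (n : nat) :
  (forall k, (1 <= k <= n)%nat -> 0 <= f k) -> 0 <= sum_range f n.
Proof.
  induction n as [|n IH]; intros hf; simpl; [lra|].
  assert (0 <= sum_range f n) by (apply IH; intros; apply hf; lia).
  assert (0 <= f (S n)) by (apply hf; lia). lra.
Qed.

Lemma sum_f_R0_range (f : nat -> R) (n : nat) :
  sum_f_R0 f n = f 0%nat + sum_range f n.
Proof. induction n as [|n IH]; simpl; [ring|rewrite IH; ring]. Qed.

Lemma sum_range_pred (g : nat -> R) (m : nat) :
  sum_range (fun k => g (k - 1)%nat) (S m) = sum_f_R0 g m.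
Proof.
  induction m as [|m IH]; [simpl; ring|].
  change (sum_range (fun k => g (k - 1)%nat) (S (S m)))
    with (sum_range (fun k => g (k - 1)%nat) (S m) + g (S (S m) - 1)%nat).
  rewrite IH. simpl. replace (m - 0)%nat with m by lia. reflexivity.
Qed.

(* The renewal-type recursion  w_n = w0 + sum_{k=1}^n w_{n-k} c_k.
   It is computed through the table  renewal_table n i = w_i  (i <= n),
   each row extending the previous one by a single new value. *)
Section Renewal.
Variable w0 : R.
Variable c : nat -> R.

Fixpoint renewal_table (n : nat) : nat -> R :=
  match n with
  | O => fun _ => w0
  | S m => fun i => if (i <=? m)%nat then renewal_table m i
                    else w0 + sum_range (fun k => renewal_table m (S m - k) * c k) (S m)
  end.

Definition renewal (n : nat) : R := renewal_table n n.

Lemma renewal_table_stable (n i : nat) : (i <= n)%nat -> renewal_table n i = renewal i.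
Proof.
  induction n as [|n IH]; intros hi.
  - assert (i = 0%nat) by lia. subst. reflexivity.
  - destruct (Nat.leb_spec i n) as [hin|hin].
    + cbn [renewal_table]. rewrite (proj2 (Nat.leb_le i n) hin). apply IH, hin.
    + assert (i = S n) by lia. subst. reflexivity.
Qed.

Lemma renewal_0 : renewal 0 = w0.
Proof. reflexivity. Qed.

Lemma renewal_rec (n : nat) :
  renewal n = w0 + sum_range (fun k => renewal (n - k) * c k) n.
Proof.
  destruct n as [|n]; [unfold renewal; simpl; ring|].
  unfold renewal at 1. cbn [renewal_table].
  rewrite (proj2 (Nat.leb_gt (S n) n) ltac:(lia)). f_equal.
  apply sum_range_ext_in. intros k hk. rewrite renewal_table_stable by lia. reflexivity.
Qed.

(* First differences of the recursion: only the increments c_{k+1} - c_k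
   survive, which is what makes the sequence grow at most geometrically. *)
Lemma renewal_diff (n : nat) :
  renewal (S n) = renewal n + c 1%nat * renewal n
                  + sum_range (fun k => renewal (n - k) * (c (S k) - c k)) n.
Proof.
  rewrite (renewal_rec (S n)), (renewal_rec n), sum_range_shift.
  replace (sum_range (fun k => renewal (n - k) * (c (S k) - c k)) n) with
    (sum_range (fun k => renewal (S n - S k) * c (S k)) n
     - sum_range (fun k => renewal (n - k) * c k) n).
  - replace (S n - 1)%nat with n by lia. rewrite (renewal_rec n). ring.
  - rewrite <- sum_range_minus. apply sum_range_ext_in. intros k hk.
    replace (S n - S k)%nat with (n - k)%nat by lia. ring.
Qed.

Fixpoint renewal_sum (n : nat) : R :=
  match n with O => 0 | S m => renewal_sum m + renewal m end.

Lemma renewal_sum_rec (n : nat) :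
  renewal_sum (S n)
  = INR (S n) * w0 + sum_range (fun k => renewal_sum (S n - k) * c k) n.
Proof.
  induction n as [|n IH]; [simpl; rewrite renewal_0; ring|].
  change (renewal_sum (S (S n))) with (renewal_sum (S n) + renewal (S n)).
  rewrite IH, (renewal_rec (S n)).
  rewrite (sum_range_ext_in (fun k => renewal_sum (S (S n) - k) * c k)
     (fun k => renewal_sum (S n - k) * c k + renewal (S n - k) * c k)).
  - rewrite sum_range_plus.
    change (sum_range (fun k => renewal_sum (S n - k) * c k) (S n)) with
      (sum_range (fun k => renewal_sum (S n - k) * c k) n
       + renewal_sum (S n - S n) * c (S n)).
    rewrite Nat.sub_diag, (S_INR (S n)). simpl renewal_sum. ring.
  - intros k hk. replace (S (S n) - k)%nat with (S (S n - k)) by lia. simpl. ring.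
Qed.

Hypothesis hw0 : 0 <= w0.
Hypothesis hc : forall k, (1 <= k)%nat -> 0 <= c k.

Lemma renewal_nonneg (n : nat) : 0 <= renewal n.
Proof.
  induction n as [n IH] using (well_founded_induction lt_wf).
  rewrite renewal_rec.
  assert (0 <= sum_range (fun k => renewal (n - k) * c k) n); [|lra].
  apply sum_range_nonneg. intros k hk. apply Rmult_le_pos; [apply IH; lia|apply hc; lia].
Qed.

Hypothesis hdec : forall k, (1 <= k)%nat -> c (S k) <= c k.

Lemma renewal_bound (n : nat) : renewal n <= w0 * (1 + c 1%nat) ^ n.
Proof.
  assert (hK : 0 <= 1 + c 1%nat) by (pose proof (hc 1%nat ltac:(lia)); lra).
  induction n as [|n IH]; [simpl; rewrite renewal_0; lra|].
  assert (hstep : renewal (S n) <= (1 + c 1%nat) * renewal n).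
  { rewrite renewal_diff.
    assert (0 <= sum_range (fun k => renewal (n - k) * (c k - c (S k))) n).
    { apply sum_range_nonneg. intros k hk. apply Rmult_le_pos; [apply renewal_nonneg|].
      pose proof (hdec k ltac:(lia)). lra. }
    replace (sum_range (fun k => renewal (n - k) * (c (S k) - c k)) n) with
      (-1 * sum_range (fun k => renewal (n - k) * (c k - c (S k))) n).
    - pose proof (renewal_nonneg n). lra.
    - rewrite <- sum_range_scal. apply sum_range_ext_in. intros; ring. }
  simpl. pose proof (Rmult_le_compat_l _ _ _ hK IH). lra.
Qed.

End Renewal.

Lemma CV_radius_gt_of_bounded (a : nat -> R) (r M x : R) :
  (forall n, Rabs (a n * r ^ n) <= M) -> Rabs x < r -> Rbar_lt (Rabs x) (CV_radius a).
Proof.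
  intros hM hx. destruct (CV_radius_bounded a) as [hub _].
  apply Rbar_lt_le_trans with (Finite r); [exact hx|].
  apply hub. exists M. exact hM.
Qed.

Lemma PSeries_unit (v s : R) : PSeries (fun n => if (n =? 0)%nat then v else 0) s = v.
Proof.
  apply is_series_unique, is_series_Reals. intros eps heps. exists 0%nat. intros n _.
  rewrite sum_f_R0_range, (sum_range_ext_in _ (fun _ => 0 * 0)).
  - rewrite sum_range_scal. unfold R_dist. simpl. rewrite Rmult_1_r.
    replace (v + 0 * sum_range (fun _ => 0) n - v) with 0 by ring.
    rewrite Rabs_R0. exact heps.
  - intros k hk. destruct k; [lia|]. simpl. ring.
Qed.

Lemma Series_nonneg (a : nat -> R) : (forall n, 0 <= a n) -> ex_series a -> 0 <= Series a.
Proof.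
  intros ha hex. pose proof (Series_le (fun n => 0 * a n) a) as hle.
  rewrite Series_scal_l in hle. apply Rle_trans with (0 * Series a); [lra|].
  apply hle; [intros n; split; [lra|]; pose proof (ha n); lra|exact hex].
Qed.

Section RenewalGenerating.
Variable w0 : R.
Variable c : nat -> R.
Hypothesis hw0 : 0 <= w0.
Hypothesis hc : forall k, (1 <= k)%nat -> 0 <= c k.
Hypothesis hdec : forall k, (1 <= k)%nat -> c (S k) <= c k.

(* Coefficients of P(s) = (1 - s)(1 - sum_k c_k s^k). *)
Definition denom_coef (k : nat) : R :=
  match k with
  | O => 1
  | S O => - (1 + c 1%nat)
  | S (S j) => c (S j) - c (S (S j))
  end.

Lemma c_le_c1 (k : nat) : (1 <= k)%nat -> c k <= c 1%nat.
Proof.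
  induction k as [|k IH]; intros hk; [lia|]. destruct k; [lra|].
  pose proof (hdec (S k) ltac:(lia)). pose proof (IH ltac:(lia)). lra.
Qed.

(* The coefficients of P are bounded, so P converges on (-1, 1). *)
Lemma denom_coef_bound (n : nat) : Rabs (denom_coef n * 1 ^ n) <= 1 + c 1%nat.
Proof.
  rewrite pow1, Rmult_1_r. pose proof (hc 1%nat ltac:(lia)).
  destruct n as [|[|j]]; simpl denom_coef.
  - rewrite Rabs_R1. lra.
  - rewrite Rabs_Ropp, Rabs_right; lra.
  - pose proof (hdec (S j) ltac:(lia)). pose proof (hc (S (S j)) ltac:(lia)).
    pose proof (c_le_c1 (S j) ltac:(lia)). rewrite Rabs_right; lra.
Qed.

(* The Cauchy product of P and w is w0 at degree 0 and vanishes afterwards: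
   this is the first-difference identity renewal_diff. *)
Lemma denom_renewal_product (n : nat) :
  PS_mult denom_coef (renewal w0 c) n = if (n =? 0)%nat then w0 else 0.
Proof.
  unfold PS_mult. rewrite sum_f_R0_range. destruct n as [|n]; [simpl; rewrite renewal_0; ring|].
  rewrite sum_range_shift. simpl (S n =? 0)%nat.
  replace (S n - 0)%nat with (S n) by lia. replace (S n - 1)%nat with n by lia.
  rewrite (sum_range_ext_in _ (fun k => (c k - c (S k)) * renewal w0 c (n - k))).
  - rewrite (renewal_diff w0 c n). simpl denom_coef.
    replace (sum_range (fun k => (c k - c (S k)) * renewal w0 c (n - k)) n) with
      (-1 * sum_range (fun k => renewal w0 c (n - k) * (c (S k) - c k)) n); [ring|].
    rewrite <- sum_range_scal. apply sum_range_ext_in. intros; ring.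
  - intros k hk. destruct k; [lia|]. simpl denom_coef.
    replace (S n - S (S k))%nat with (n - S k)%nat by lia. reflexivity.
Qed.

Lemma renewal_generating (s : R) : 0 <= s -> s * (1 + c 1%nat) < 1 ->
  is_pseries (renewal w0 c) s (PSeries (renewal w0 c) s) /\
  PSeries denom_coef s * PSeries (renewal w0 c) s = w0.
Proof.
  intros hs hsK. set (K := 1 + c 1%nat) in *.
  assert (hK : 1 <= K) by (unfold K; pose proof (hc 1%nat ltac:(lia)); lra).
  assert (hs1 : s < 1) by nra.
  assert (hrw : Rbar_lt (Rabs s) (CV_radius (renewal w0 c))).
  { apply (CV_radius_gt_of_bounded _ (/ K) w0).
    - intros n. pose proof (renewal_bound w0 c hw0 hc hdec n) as hb. fold K in hb.
      assert (hKn : 0 < K ^ n) by (apply pow_lt; lra).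
      rewrite Rabs_right.
      + rewrite pow_inv. apply Rle_trans with (w0 * K ^ n * / K ^ n).
        * apply Rmult_le_compat_r; [left; apply Rinv_0_lt_compat|]; lra.
        * right. field. lra.
      + apply Rle_ge, Rmult_le_pos; [apply renewal_nonneg; auto|].
        apply pow_le. left. apply Rinv_0_lt_compat. lra.
    - rewrite Rabs_right by lra. apply (Rmult_lt_reg_r K); [lra|].
      rewrite Rinv_l by lra. lra. }
  assert (hrp : Rbar_lt (Rabs s) (CV_radius denom_coef)).
  { apply (CV_radius_gt_of_bounded _ 1 (1 + c 1%nat)); [apply denom_coef_bound|].
    rewrite Rabs_right; lra. }
  split; [exact (PSeries_correct _ _ (CV_radius_inside _ _ hrw))|].
  rewrite <- PSeries_mult by auto.
  rewrite (PSeries_ext _ (fun n => if (n =? 0)%nat then w0 else 0))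
    by apply denom_renewal_product.
  apply PSeries_unit.
Qed.

End RenewalGenerating.

(* Integer part on [0, oo), as a natural number. *)
Definition fl (x : R) : nat := Z.to_nat (up x - 1).

Lemma fl_spec (x : R) : 0 <= x -> INR (fl x) <= x < INR (fl x) + 1.
Proof.
  intros hx. destruct (archimed x) as [h1 h2].
  assert (hz : (0 < up x)%Z) by (apply lt_IZR; simpl; lra).
  unfold fl. rewrite INR_IZR_INZ, Z2Nat.id by lia. rewrite minus_IZR. simpl. lra.
Qed.

Lemma fl_unique (x : R) (n : nat) : INR n <= x < INR n + 1 -> fl x = n.
Proof.
  intros hn. assert (hx : 0 <= x) by (pose proof (pos_INR n); lra).
  destruct (fl_spec x hx) as [h1 h2].
  assert ((fl x < S n)%nat) by (apply INR_lt; rewrite S_INR; lra).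
  assert ((n < S (fl x))%nat) by (apply INR_lt; rewrite S_INR; lra).
  lia.
Qed.

Lemma exp_INR (b : R) (i : nat) : exp (- b * INR i) = exp (- b) ^ i.
Proof.
  induction i as [|i IH]; [simpl; rewrite Rmult_0_r; apply exp_0|].
  rewrite S_INR. simpl. rewrite <- IH, <- exp_plus. f_equal. ring.
Qed.

Lemma exp_le_mono (x y : R) : x <= y -> exp x <= exp y.
Proof. intros h. destruct (Req_dec x y) as [->|hne]; [lra|left; apply exp_increasing; lra]. Qed.

Lemma exp_continuous (b x : R) : continuous (fun x => exp (- b * x)) x.
Proof. apply (ex_derive_continuous (fun x => exp (- b * x))). auto_derive. auto. Qed.

Lemma is_RInt_exp (b x1 x2 : R) : b <> 0 ->
  is_RInt (fun x => exp (- b * x)) x1 x2 ((exp (- b * x1) - exp (- b * x2)) / b).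
Proof.
  intros hb.
  replace ((exp (- b * x1) - exp (- b * x2)) / b) with
    (minus ((fun x => - exp (- b * x) / b) x2) ((fun x => - exp (- b * x) / b) x1))
    by (unfold minus, plus, opp; simpl; field; exact hb).
  apply (is_RInt_derive (fun x => - exp (- b * x) / b)).
  - intros x _. auto_derive; [auto|field; exact hb].
  - intros x _. apply exp_continuous.
Qed.

Section StepIntegral.
Variable a : nat -> R.
Variable f : R -> R.
Hypothesis hf : forall x, continuous f x.

Definition step_weighted (x : R) : R := f x * a (fl x).

Lemma step_piece (i : nat) (u v : R) : INR i <= u <= v -> v <= INR i + 1 ->
  is_RInt step_weighted u v (a i * RInt f u v).
Proof.
  intros h1 h2.
  apply (is_RInt_ext (fun x => scal (a i) (f x))).
  - intros x hx. rewrite Rmin_left in hx by lra. rewrite Rmax_right in hx by lra.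
    unfold step_weighted. rewrite (fl_unique x i) by lra.
    unfold scal; simpl; unfold mult; simpl. ring.
  - apply (is_RInt_scal (V := R_NormedModule)), (RInt_correct (V := R_CompleteNormedModule)).
    apply (ex_RInt_continuous (V := R_CompleteNormedModule)). intros; apply hf.
Qed.

Lemma step_integral_nat (n : nat) :
  is_RInt step_weighted 0 (INR n)
    (sum_range (fun k => a (k - 1)%nat * RInt f (INR (k - 1)) (INR k)) n).
Proof.
  induction n as [|n IH]; [apply (is_RInt_point (V := R_NormedModule))|].
  replace (sum_range _ (S n)) with
    (plus (sum_range (fun k => a (k - 1)%nat * RInt f (INR (k - 1)) (INR k)) n)
          (a n * RInt f (INR n) (INR (S n))))
    by (simpl; replace (n - 0)%nat with n by lia; reflexivity).
  apply (is_RInt_Chasles _ _ _ _ _ _ IH). apply step_piece; rewrite ?S_INR; lra.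
Qed.

Lemma step_integral_real (T : R) : 0 <= T ->
  is_RInt step_weighted 0 T
    (sum_range (fun k => a (k - 1)%nat * RInt f (INR (k - 1)) (INR k)) (fl T)
     + a (fl T) * RInt f (INR (fl T)) T).
Proof.
  intros hT. destruct (fl_spec T hT) as [h1 h2].
  apply (is_RInt_Chasles step_weighted 0 (INR (fl T)) T _ _ (step_integral_nat (fl T))).
  apply step_piece; lra.
Qed.

End StepIntegral.

Lemma step_laplace_truncated (a : nat -> R) (b T : R) (m : nat) :
  b > 0 -> 0 <= T -> fl T = S m ->
  is_RInt (fun x => exp (- b * x) * a (fl x)) 0 T
    ((1 - exp (- b)) / b * sum_f_R0 (fun i => a i * exp (- b) ^ i) m
     + a (S m) * ((exp (- b) ^ S m - exp (- b * T)) / b)).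
Proof.
  intros hb hT hm.
  assert (hpiece : forall u v, RInt (fun x => exp (- b * x)) u v
                               = (exp (- b * u) - exp (- b * v)) / b)
    by (intros u v; apply is_RInt_unique, is_RInt_exp; lra).
  refine (eq_ind _ (is_RInt _ 0 T) (step_integral_real a _ (exp_continuous b) T hT) _ _).
  rewrite hm, hpiece, exp_INR. f_equal.
  rewrite <- sum_range_pred, <- sum_range_scal. apply sum_range_ext_in.
  intros k hk. rewrite hpiece, !exp_INR.
  replace k with (S (k - 1)) at 3 by lia. simpl. field. lra.
Qed.

Lemma step_laplace (a : nat -> R) (b G : R) : b > 0 -> (forall n, 0 <= a n) ->
  infinite_sum (fun i => a i * exp (- b) ^ i) G ->
  (forall T, 0 <= T -> ex_RInt (fun x => exp (- b * x) * a (fl x)) 0 T) /\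
  forall eps, eps > 0 -> exists M, forall T, T >= M ->
    Rabs (RInt (fun x => exp (- b * x) * a (fl x)) 0 T - (1 - exp (- b)) / b * G) < eps.
Proof.
  intros hb ha hG.
  split; [intros T hT; eexists; exact (step_integral_real a _ (exp_continuous b) T hT)|].
  set (s := exp (- b)).
  assert (hs0 : 0 < s) by apply exp_pos.
  assert (hs1 : s < 1) by (unfold s; rewrite <- exp_0; apply exp_increasing; lra).
  intros eps heps.
  set (e' := eps * b / 3). assert (he' : e' > 0) by (unfold e'; nra).
  destruct (hG e' he') as [N hN]. exists (INR N + 2). intros T hT.
  assert (hT0 : 0 <= T) by (pose proof (pos_INR N); lra).
  destruct (fl_spec T hT0) as [hf1 hf2].
  assert (hn : (N < fl T)%nat) by (apply INR_lt; lra).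
  destruct (fl T) as [|m] eqn:hm; [lia|].
  rewrite (is_RInt_unique _ _ _ _ (step_laplace_truncated a b T m hb hT0 hm)). fold s.
  (* The error is (1-s)/b (S_m - G) plus the incomplete last piece r,
     and 0 <= r <= a_{m+1} s^{m+1} / b = (S_{m+1} - S_m) / b. *)
  set (Sm := sum_f_R0 (fun i => a i * s ^ i) m).
  pose proof (hN m ltac:(lia)) as h1. pose proof (hN (S m) ltac:(lia)) as h2.
  unfold R_dist in h1, h2. rewrite tech5 in h2. fold s Sm in h1, h2.
  apply Rabs_def2 in h1. apply Rabs_def2 in h2.
  assert (heT : exp (- b * T) <= s ^ S m).
  { unfold s. rewrite <- exp_INR. apply exp_le_mono. nra. }
  pose proof (exp_pos (- b * T)). pose proof (ha (S m)).
  set (r := a (S m) * ((s ^ S m - exp (- b * T)) / b)).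
  assert (hr0 : 0 <= r) by (apply Rmult_le_pos; [lra|apply Rdiv_le_0_compat; lra]).
  assert (hr1 : r < 2 * e' / b).
  { unfold r, Rdiv. apply Rle_lt_trans with (a (S m) * s ^ S m * / b).
    - rewrite <- Rmult_assoc, Rmult_minus_distr_l.
      apply Rmult_le_compat_r; [left; apply Rinv_0_lt_compat; lra|].
      pose proof (Rmult_le_pos _ _ (ha (S m)) (Rlt_le _ _ (exp_pos (- b * T)))). lra.
    - apply Rmult_lt_compat_r; [apply Rinv_0_lt_compat; lra|lra]. }
  assert (herr : Rabs ((1 - s) / b * (Sm - G)) <= e' / b).
  { rewrite Rabs_mult, Rabs_right by (apply Rle_ge, Rdiv_le_0_compat; lra).
    apply Rle_trans with (1 / b * e'); [|right; field; lra].
    apply Rmult_le_compat; [apply Rdiv_le_0_compat; lra|apply Rabs_pos| |apply Rabs_le; lra].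
    unfold Rdiv. apply Rmult_le_compat_r; [left; apply Rinv_0_lt_compat|]; lra. }
  replace ((1 - s) / b * Sm + r - (1 - s) / b * G) with ((1 - s) / b * (Sm - G) + r) by ring.
  apply Rle_lt_trans with (Rabs ((1 - s) / b * (Sm - G)) + Rabs r); [apply Rabs_triang|].
  rewrite (Rabs_right r) by lra.
  assert (e' / b + 2 * e' / b = eps) by (unfold e'; field; lra). lra.
Qed.

Lemma RInt_exp_tail_bound (g : R -> R) (C e u T : R) : e > 0 -> u <= T ->
  (forall x, u <= x <= T -> Rabs (g x) <= C * exp (- e * x)) ->
  ex_RInt g u T -> Rabs (RInt g u T) <= C * exp (- e * u) / e.
Proof.
  intros he huT hb hg.
  assert (hC : 0 <= C).
  { pose proof (hb u (conj (Rle_refl u) huT)). pose proof (exp_pos (- e * u)).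
    pose proof (Rabs_pos (g u)). nra. }
  assert (hI : is_RInt (fun x => C * exp (- e * x)) u T
                 (C * ((exp (- e * u) - exp (- e * T)) / e)))
    by (apply (is_RInt_scal _ u T C _ (is_RInt_exp e u T ltac:(lra)))).
  pose proof (norm_RInt_le g _ u T _ _ huT hb (RInt_correct _ _ _ hg) hI) as h.
  change (norm (RInt g u T)) with (Rabs (RInt g u T)) in h.
  pose proof (exp_pos (- e * T)).
  assert (C * ((exp (- e * u) - exp (- e * T)) / e) <= C * exp (- e * u) / e); [|lra].
  unfold Rdiv. rewrite <- Rmult_assoc. apply Rmult_le_compat_r; [left; apply Rinv_0_lt_compat|]; nra.
Qed.

Lemma first_nonzero_point (D : R -> R) (x : R) :
  (forall x, 0 <= x -> exists d, d > 0 /\ forall y, x <= y < x + d -> D y = D x) ->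
  0 <= x -> D x <> 0 ->
  exists x0 d, 0 <= x0 /\ d > 0 /\ D x0 <> 0 /\
    (forall y, 0 <= y < x0 -> D y = 0) /\ (forall y, x0 <= y < x0 + d -> D y = D x0).
Proof.
  intros hrc hx hDx.
  set (E := fun y => forall z, 0 <= z -> D z <> 0 -> y <= z).
  destruct (completeness E) as [x0 [hub hlub]].
  { exists x. intros y hy. apply hy; auto. }
  { exists 0. intros z hz _. exact hz. }
  assert (hx0 : 0 <= x0) by (apply hub; intros z hz _; exact hz).
  assert (hle : forall z, 0 <= z -> D z <> 0 -> x0 <= z)
    by (intros z hz hDz; apply hlub; intros y hy; apply hy; auto).
  destruct (hrc x0 hx0) as [d [hd hconst]].
  assert (hD0 : D x0 <> 0).
  { intros h0. assert (x0 + d <= x0); [|lra].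
    apply hub. intros z hz hDz. destruct (Rlt_or_le z (x0 + d)) as [hlt|]; auto.
    exfalso. apply hDz. pose proof (hle z hz hDz). rewrite (hconst z) by lra. exact h0. }
  exists x0, d. repeat split; auto.
  intros y hy. destruct (Req_dec (D y) 0) as [|hne]; auto.
  pose proof (hle y (proj1 hy) hne). lra.
Qed.

Lemma laplace_tail_bound (D : R -> R) (C a b u T : R) :
  0 <= u -> u <= T -> b > 2 * Rabs a ->
  (forall y, 0 <= y -> Rabs (D y) <= C * exp (a * y)) ->
  ex_RInt (fun x => exp (- b * x) * D x) u T ->
  Rabs (RInt (fun x => exp (- b * x) * D x) u T)
  <= 2 * (C * exp (a * u)) * exp (- b * u) / b.
Proof.
  intros hu huT hb hexp hint.
  pose proof (Rle_abs a). pose proof (Rabs_pos a).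
  assert (hC : 0 <= C).
  { pose proof (hexp u hu). pose proof (exp_pos (a * u)). pose proof (Rabs_pos (D u)). nra. }
  apply Rle_trans with (C * exp (- (b - a) * u) / (b - a)).
  - apply RInt_exp_tail_bound; auto; try lra. intros y hy.
    rewrite Rabs_mult, (Rabs_right (exp _)) by (left; apply exp_pos).
    replace (C * exp (- (b - a) * y)) with (exp (- b * y) * (C * exp (a * y)))
      by (replace (- (b - a) * y) with (- b * y + a * y) by ring; rewrite exp_plus; ring).
    apply Rmult_le_compat_l; [left; apply exp_pos|apply hexp; lra].
  - replace (- (b - a) * u) with (- b * u + a * u) by ring. rewrite exp_plus.
    set (P := C * exp (a * u) * exp (- b * u)).
    assert (0 <= P) by (unfold P; apply Rmult_le_pos; [apply Rmult_le_pos|]; [|left; apply exp_pos..]; lra).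
    apply Rle_trans with (P / (b / 2)).
    + replace (C * (exp (- b * u) * exp (a * u)) / (b - a)) with (P / (b - a)) by (unfold P; field; lra).
      unfold Rdiv. apply Rmult_le_compat_l; [lra|]. apply Rinv_le_contravar; lra.
    + right. unfold P. field. lra.
Qed.

(* Lower bound for a truncated Laplace transform of D vanishing on [0, x0)
   and equal to c = D x0 on [x0, x0 + d): the first piece contributes
   |c| e^{-b x0}(1 - e^{-bd})/b, the rest at most 2 K e^{-b x0} e^{-bd}/b
   with K = C e^{a (x0 + d)}. *)
Lemma laplace_first_piece (D : R -> R) (C a x0 d b T : R) :
  0 <= x0 -> d > 0 -> b > 2 * Rabs a -> x0 + d <= T ->
  (forall y, 0 <= y < x0 -> D y = 0) ->
  (forall y, x0 <= y < x0 + d -> D y = D x0) ->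
  (forall y, 0 <= y -> Rabs (D y) <= C * exp (a * y)) ->
  ex_RInt (fun x => exp (- b * x) * D x) 0 T ->
  exp (- b * x0) / b * (Rabs (D x0) * (1 - exp (- b * d))
                        - 2 * (C * exp (a * (x0 + d))) * exp (- b * d))
  <= Rabs (RInt (fun x => exp (- b * x) * D x) 0 T).
Proof.
  intros hx0 hd hb hT hzero hconst hexp hint.
  set (g := fun x => exp (- b * x) * D x).
  pose proof (Rabs_pos a).
  assert (hsplit : exp (- b * (x0 + d)) = exp (- b * x0) * exp (- b * d))
    by (rewrite <- exp_plus; f_equal; ring).
  assert (hg1 : ex_RInt g 0 (x0 + d)) by (apply (ex_RInt_Chasles_1 g 0 (x0 + d) T); [lra|exact hint]).
  assert (hg2 : ex_RInt g (x0 + d) T) by (apply (ex_RInt_Chasles_2 g 0 (x0 + d) T); [lra|exact hint]).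
  assert (hg3 : ex_RInt g 0 x0) by (apply (ex_RInt_Chasles_1 g 0 x0 (x0 + d)); [lra|exact hg1]).
  assert (hg4 : ex_RInt g x0 (x0 + d)) by (apply (ex_RInt_Chasles_2 g 0 x0 (x0 + d)); [lra|exact hg1]).
  assert (hsum : RInt g 0 T = RInt g 0 x0 + RInt g x0 (x0 + d) + RInt g (x0 + d) T)
    by (rewrite <- (RInt_Chasles g 0 (x0 + d) T hg1 hg2), <- (RInt_Chasles g 0 x0 (x0 + d) hg3 hg4); reflexivity).
  assert (hbefore : RInt g 0 x0 = 0).
  { rewrite (RInt_ext g (fun _ => 0)), RInt_const.
    - unfold scal; simpl; unfold mult; simpl. ring.
    - intros y hy. rewrite Rmin_left in hy by lra. rewrite Rmax_right in hy by lra.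
      unfold g. rewrite hzero by lra. apply Rmult_0_r. }
  assert (hpiece : RInt g x0 (x0 + d) = D x0 * ((exp (- b * x0) - exp (- b * (x0 + d))) / b)).
  { apply is_RInt_unique.
    apply (is_RInt_ext (fun y => scal (D x0) (exp (- b * y)))).
    - intros y hy. rewrite Rmin_left in hy by lra. rewrite Rmax_right in hy by lra.
      unfold g. rewrite (hconst y) by lra. unfold scal; simpl; unfold mult; simpl. ring.
    - apply (is_RInt_scal (fun y => exp (- b * y))), is_RInt_exp. lra. }
  assert (hmid : Rabs (RInt g x0 (x0 + d))
                 = exp (- b * x0) / b * (Rabs (D x0) * (1 - exp (- b * d)))).
  { rewrite hpiece, hsplit, Rabs_mult.
    pose proof (exp_pos (- b * x0)). pose proof (exp_pos (- b * d)).
    assert (exp (- b * d) < 1) by (rewrite <- exp_0; apply exp_increasing; nra).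
    rewrite (Rabs_right ((_ - _) / b)) by (apply Rle_ge, Rdiv_le_0_compat; nra).
    field. lra. }
  pose proof (laplace_tail_bound D C a b (x0 + d) T ltac:(lra) hT hb hexp hg2) as htail.
  fold g in htail. rewrite hsplit in htail.
  fold g. rewrite hsum, hbefore, Rplus_0_l.
  pose proof (Rabs_triang_inv (RInt g x0 (x0 + d)) (- RInt g (x0 + d) T)) as htri.
  unfold Rminus in htri. rewrite Ropp_involutive, Rabs_Ropp, hmid in htri.
  unfold Rminus. rewrite Rmult_plus_distr_l.
  replace (exp (- b * x0) / b * - (2 * (C * exp (a * (x0 + d))) * exp (- b * d)))
    with (- (2 * (C * exp (a * (x0 + d))) * (exp (- b * x0) * exp (- b * d)) / b))
    by (field; lra).
  lra.
Qed.

(* A piece of length d beats the remainder for large b: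
   c (1 - e^{-bd}) > 2 K e^{-bd} as soon as c b d > 2 K, since e^{bd} >= 1 + bd. *)
Lemma piece_dominates (c K b d : R) : 0 < c -> c * (b * d) > 2 * K ->
  0 < c * (1 - exp (- b * d)) - 2 * K * exp (- b * d).
Proof.
  intros hc hcbd. set (u := exp (- b * d)).
  assert (hu : 0 < u) by apply exp_pos.
  assert (hu1 : u * (1 + b * d) <= 1).
  { pose proof (exp_ineq1_le (b * d)). unfold u.
    replace 1 with (exp (- b * d) * exp (b * d)) at 2
      by (rewrite <- exp_plus; replace (- b * d + b * d) with 0 by ring; apply exp_0).
    apply Rmult_le_compat_l; [left; apply exp_pos|lra]. }
  assert (u * (c * (b * d)) > u * (2 * K)) by (apply Rmult_gt_compat_l; lra).
  assert (0 <= c * (1 - u * (1 + b * d))) by (apply Rmult_le_pos; lra).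
  nra.
Qed.

Lemma laplace_uniqueness (D : R -> R) (C a b0 : R) :
  (forall x, 0 <= x -> exists d, d > 0 /\ forall y, x <= y < x + d -> D y = D x) ->
  (forall x, 0 <= x -> Rabs (D x) <= C * exp (a * x)) ->
  (forall b, b > b0 -> (forall T, 0 <= T -> ex_RInt (fun x => exp (- b * x) * D x) 0 T) /\
     forall eps, eps > 0 -> exists M, forall T, T >= M ->
        Rabs (RInt (fun x => exp (- b * x) * D x) 0 T) < eps) ->
  forall x, 0 <= x -> D x = 0.
Proof.
  intros hrc hexp hL x hx.
  destruct (Req_dec (D x) 0) as [|hDx]; [assumption|exfalso].
  destruct (first_nonzero_point D x hrc hx hDx) as [x0 [d [hx0 [hd [hc [hzero hconst]]]]]].
  set (c := Rabs (D x0)). assert (hcpos : 0 < c) by (apply Rabs_pos_lt; exact hc).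
  set (K := C * exp (a * (x0 + d))).
  (* choose b > b0 so large that the first piece dominates; then the
     truncated transforms stay bounded away from 0, a contradiction *)
  set (b := Rmax (Rmax (b0 + 1) (2 * Rabs a + 1)) ((2 * K / c + 1) / d)).
  assert (hb : b > b0 /\ b > 2 * Rabs a /\ b >= (2 * K / c + 1) / d).
  { pose proof (Rmax_l (Rmax (b0 + 1) (2 * Rabs a + 1)) ((2 * K / c + 1) / d)).
    pose proof (Rmax_r (Rmax (b0 + 1) (2 * Rabs a + 1)) ((2 * K / c + 1) / d)).
    pose proof (Rmax_l (b0 + 1) (2 * Rabs a + 1)). pose proof (Rmax_r (b0 + 1) (2 * Rabs a + 1)).
    unfold b. lra. }
  destruct hb as [hb0 [hba hbd]]. pose proof (Rabs_pos a).
  assert (hcbd : c * (b * d) > 2 * K).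
  { apply (Rmult_ge_compat_r d) in hbd; [|lra].
    replace ((2 * K / c + 1) / d * d) with (2 * K / c + 1) in hbd by (field; lra).
    apply (Rmult_ge_compat_l c) in hbd; [|lra].
    replace (c * (2 * K / c + 1)) with (2 * K + c) in hbd by (field; lra). lra. }
  assert (hpos : 0 < exp (- b * x0) / b * (c * (1 - exp (- b * d)) - 2 * K * exp (- b * d))).
  { apply Rmult_lt_0_compat; [apply Rdiv_lt_0_compat; [apply exp_pos|lra]|].
    apply piece_dominates; assumption. }
  destruct (hL b hb0) as [hint hlim].
  destruct (hlim _ hpos) as [M hM].
  set (T := Rmax M (x0 + d)).
  assert (hTM : T >= M) by apply Rle_ge, Rmax_l.
  assert (hTx : x0 + d <= T) by apply Rmax_r.
  pose proof (hM T hTM) as hsmall.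
  pose proof (laplace_first_piece D C a x0 d b T hx0 hd hba hTx hzero hconst hexp
                (hint T ltac:(lra))) as hlarge.
  fold c K in hlarge. lra.
Qed.

Lemma largest_root (f : R -> R) (q : R) :
  (forall b, 0 < b -> continuity_pt f b) ->
  (exists b, 0 <= b /\ f b = q) ->
  (exists B, forall b, 0 <= b -> f b = q -> b <= B) ->
  exists p, 0 <= p /\ f p = q /\ forall b, 0 <= b -> f b = q -> b <= p.
Proof.
  intros hcont [b0 [hb0 hfb0]] [B hB].
  set (roots := fun b => 0 <= b /\ f b = q).
  destruct (completeness roots) as [p [hub hlub]].
  { exists B. intros b [hb hfb]. apply hB; auto. }
  { exists b0. split; auto. }
  assert (hp0 : 0 <= p) by (pose proof (hub b0 (conj hb0 hfb0)); lra).
  exists p. split; [exact hp0|]. split; [|intros b hb hfb; apply hub; split; auto].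
  destruct (Req_dec (f p) q) as [|hne]; [assumption|exfalso].
  destruct (Req_dec p 0) as [hp|hp].
  { pose proof (hub b0 (conj hb0 hfb0)). assert (b0 = p) by lra. subst b0. contradiction. }
  (* f stays away from q on a left neighbourhood (p - d, p] of p, so p - d
     would be a smaller upper bound of the roots *)
  pose proof (hcont p ltac:(lra)) as hc.
  unfold continuity_pt, continue_in, limit1_in, limit_in in hc. simpl in hc.
  destruct (hc (Rabs (f p - q)) ltac:(apply Rabs_pos_lt; lra)) as [del [hdel hclose]].
  set (d := Rmin (del / 2) (p / 2)).
  assert (hd : 0 < d) by (unfold d; apply Rmin_glb_lt; lra).
  assert (hd1 : d <= del / 2) by apply Rmin_l.
  assert (p <= p - d); [|lra].
  apply hlub. intros b [hb hfb].
  assert (hbp : b <= p) by (apply hub; split; auto).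
  destruct (Rle_or_lt b (p - d)) as [|hlt]; [assumption|exfalso].
  destruct (Req_dec b p) as [->|hbp']; [contradiction|].
  assert (hfar : Rdist (f b) (f p) < Rabs (f p - q)).
  { apply hclose. split; [split; [exact I|auto]|].
    unfold Rdist. rewrite Rabs_left; lra. }
  unfold Rdist in hfar. rewrite hfb, <- Rabs_Ropp in hfar.
  replace (- (q - f p)) with (f p - q) in hfar by ring. lra.
Qed.

Lemma Rsum_is (u : nat -> R) (l : R) : is_series u l -> Rsum u = l.
Proof.
  intros h. apply is_series_Reals in h. unfold Rsum.
  pose proof (epsilon_spec (inhabits 0) (fun l => infinite_sum u l) (ex_intro _ l h)).
  eapply uniqueness_sum; eauto.
Qed.

Section LevyChain.
Variable nu : Z -> R.
Hypothesis hnu : skip_free_levy nu.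

Definition down_jump (j : nat) : R := nu (- (Z.of_nat j + 1))%Z.
Definition up_jump : R := nu 1%Z.
Definition down_mass : R := Series down_jump.

Lemma down_jump_nonneg (j : nat) : 0 <= down_jump j.
Proof. destruct hnu as [h _]. apply h. Qed.

Lemma up_jump_pos : 0 < up_jump.
Proof. destruct hnu as [_ [_ [_ [h _]]]]. exact h. Qed.

Lemma down_jump_summable : ex_series down_jump.
Proof. destruct hnu as [_ [_ [_ [_ [s hs]]]]]. exists s. apply is_series_Reals. exact hs. Qed.

Lemma down_jump_shift_summable (m : nat) : ex_series (fun j => down_jump (m + j)%nat).
Proof. apply (ex_series_incr_n down_jump m), down_jump_summable. Qed.

Lemma down_mass_nonneg : 0 <= down_mass.
Proof. apply Series_nonneg; [apply down_jump_nonneg|apply down_jump_summable]. Qed.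

Lemma nu_tail_series (m : nat) : nu_tail nu (S m) = Series (fun j => down_jump (m + j)%nat).
Proof.
  unfold nu_tail. apply Rsum_is.
  apply (is_series_ext (fun j => down_jump (m + j)%nat)).
  - intros j. unfold down_jump. f_equal. lia.
  - apply Series_correct, down_jump_shift_summable.
Qed.

Lemma nu_tail_nonneg (k : nat) : (1 <= k)%nat -> 0 <= nu_tail nu k.
Proof.
  intros hk. destruct k as [|m]; [lia|]. rewrite nu_tail_series.
  apply Series_nonneg; [intros; apply down_jump_nonneg|apply down_jump_shift_summable].
Qed.

Lemma nu_tail_succ (m : nat) : nu_tail nu (S m) = down_jump m + nu_tail nu (S (S m)).
Proof.
  rewrite !nu_tail_series, Series_incr_1 by apply down_jump_shift_summable.
  rewrite Nat.add_0_r. f_equal. apply Series_ext. intros j. f_equal. lia.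
Qed.

Lemma nu_tail_1 : nu_tail nu 1%nat = down_mass.
Proof. rewrite nu_tail_series. apply Series_ext. reflexivity. Qed.

Variable q : R.
Hypothesis hq : 0 <= q.

Definition scale_coef (k : nat) : R := (q + nu_tail nu k) / up_jump.

Lemma scale_coef_nonneg (k : nat) : (1 <= k)%nat -> 0 <= scale_coef k.
Proof.
  intros hk. apply Rdiv_le_0_compat; [pose proof (nu_tail_nonneg k hk); lra|apply up_jump_pos].
Qed.

Lemma scale_coef_noninc (k : nat) : (1 <= k)%nat -> scale_coef (S k) <= scale_coef k.
Proof.
  intros hk. destruct k as [|m]; [lia|]. unfold scale_coef. rewrite (nu_tail_succ m).
  unfold Rdiv. apply Rmult_le_compat_r; [left; apply Rinv_0_lt_compat, up_jump_pos|].
  pose proof (down_jump_nonneg m). lra.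
Qed.

End LevyChain.

Section LaplaceExponent.
Variable nu : Z -> R.
Hypothesis hnu : skip_free_levy nu.

Definition down_gen (n : nat) : R := match n with O => 0 | S j => down_jump nu j end.

Lemma exp_neg_unit (b : R) : 0 <= b -> 0 <= exp (- b) <= 1.
Proof.
  intros hb. split; [left; apply exp_pos|]. rewrite <- exp_0. apply exp_le_mono. lra.
Qed.

Lemma pow_unit (s : R) (n : nat) : 0 <= s <= 1 -> 0 <= s ^ n <= 1.
Proof. intros hs. split; [apply pow_le; lra|rewrite <- (pow1 n); apply pow_incr; lra]. Qed.

Lemma down_gen_series (s : R) : 0 <= s <= 1 ->
  is_series (fun j => down_jump nu j * s ^ (S j)) (PSeries down_gen s).
Proof.
  intros hs.
  assert (hgen : forall n, 0 <= down_gen n)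
    by (intros [|n]; simpl; [lra|apply down_jump_nonneg; auto]).
  assert (hex : ex_series (fun n => down_gen n * s ^ n)).
  { apply (ex_series_le (K := R_AbsRing) (V := R_CompleteNormedModule) _ down_gen).
    - intros n. change (norm (down_gen n * s ^ n)) with (Rabs (down_gen n * s ^ n)).
      pose proof (hgen n). pose proof (pow_unit s n hs).
      rewrite Rabs_right by (apply Rle_ge, Rmult_le_pos; lra).
      rewrite <- (Rmult_1_r (down_gen n)) at 2. apply Rmult_le_compat_l; lra.
    - apply ex_series_incr_1, down_jump_summable, hnu. }
  unfold PSeries. rewrite (Series_incr_1 _ hex). simpl down_gen. rewrite Rmult_0_l, Rplus_0_l.
  apply Series_correct, (proj1 (ex_series_incr_1 _) hex).
Qed.

Definition phi (b : R) : R :=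
  up_jump nu * (exp b - 1) + PSeries down_gen (exp (- b)) - down_mass nu.

Lemma laplace_exp_phi (b : R) : 0 <= b -> laplace_exp nu b = phi b.
Proof.
  intros hb. unfold laplace_exp, phi. fold (up_jump nu).
  rewrite (Rsum_is _ (PSeries down_gen (exp (- b)) - down_mass nu)); [ring|].
  pose proof (is_series_minus _ _ _ _ (down_gen_series _ (exp_neg_unit b hb))
                (Series_correct _ (down_jump_summable nu hnu))) as hser.
  refine (is_series_ext _ _ _ _ hser). intros n.
  unfold plus, opp; simpl. unfold down_jump.
  replace (exp (- (INR n + 1) * b)) with (exp (- b) * exp (- b) ^ n)
    by (rewrite <- (exp_INR b n), <- exp_plus; f_equal; ring).
  ring.
Qed.

Lemma phi_0 : phi 0 = 0.
Proof.
  unfold phi. rewrite Ropp_0, exp_0.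
  rewrite <- (is_series_unique _ _ (down_gen_series 1 ltac:(lra))).
  rewrite (Series_ext _ (down_jump nu)) by (intros; rewrite pow1; ring). unfold down_mass. ring.
Qed.

Lemma down_jump_le_mass (j : nat) : down_jump nu j <= down_mass nu.
Proof.
  unfold down_mass.
  rewrite (Series_incr_n (down_jump nu) (S j)) by (lia || apply down_jump_summable; auto).
  simpl pred.
  assert (0 <= Series (fun k => down_jump nu (S j + k)%nat)).
  { apply Series_nonneg; [intros; apply down_jump_nonneg; auto|].
    apply (ex_series_incr_n (down_jump nu) (S j)), down_jump_summable, hnu. }
  destruct j as [|j]; [change (sum_f_R0 (down_jump nu) 0) with (down_jump nu 0); lra|].
  rewrite tech5.
  assert (0 <= sum_f_R0 (down_jump nu) j) by (apply cond_pos_sum; intros; apply down_jump_nonneg; auto).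
  lra.
Qed.

(* phi is continuous on (0, oo): the power series is evaluated inside its
   disc of convergence. *)
Lemma phi_continuous (b : R) : 0 < b -> continuity_pt phi b.
Proof.
  intros hb.
  assert (hder : forall (g : R -> R) x, ex_derive g x -> continuity_pt g x)
    by (intros g x h; apply continuity_pt_filterlim; exact (ex_derive_continuous g x h)).
  apply (continuity_pt_ext (fun b => up_jump nu * (exp b - 1)
          + comp (PSeries down_gen) (fun b => exp (- b)) b + - down_mass nu));
    [intros x; unfold phi, comp; ring|].
  apply continuity_pt_plus; [apply continuity_pt_plus|apply continuity_pt_const; intros ? ?; reflexivity].
  - apply hder. auto_derive. auto.
  - apply continuity_pt_comp; [apply hder; auto_derive; auto|].
    apply PSeries_continuity. apply (CV_radius_gt_of_bounded _ 1 (down_mass nu)).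
    + intros n. rewrite pow1, Rmult_1_r. destruct n as [|n]; simpl.
      * rewrite Rabs_R0. apply down_mass_nonneg, hnu.
      * rewrite Rabs_right by (apply Rle_ge, down_jump_nonneg; auto). apply down_jump_le_mass.
    + rewrite Rabs_right by (left; apply exp_pos). rewrite <- exp_0. apply exp_increasing. lra.
Qed.

Lemma phi_bounds (b : R) : 0 <= b ->
  up_jump nu * (exp b - 1) - down_mass nu <= phi b <= up_jump nu * (exp b - 1).
Proof.
  intros hb. unfold phi. pose proof (exp_neg_unit b hb) as hs.
  pose proof (down_gen_series _ hs) as hser.
  rewrite <- (is_series_unique _ _ hser).
  assert (hterm : forall n, 0 <= down_jump nu n * exp (- b) ^ S n <= down_jump nu n).
  { intros n. pose proof (down_jump_nonneg nu hnu n).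
    pose proof (pow_unit _ (S n) hs).
    split; [apply Rmult_le_pos; lra|].
    rewrite <- (Rmult_1_r (down_jump nu n)) at 2. apply Rmult_le_compat_l; lra. }
  split.
  - assert (0 <= Series (fun j => down_jump nu j * exp (- b) ^ S j)); [|lra].
    apply Series_nonneg; [intros n; apply hterm|eexists; exact hser].
  - assert (Series (fun j => down_jump nu j * exp (- b) ^ S j) <= down_mass nu); [|lra].
    apply Series_le; [exact hterm|apply down_jump_summable, hnu].
Qed.

Variable q : R.
Hypothesis hq : 0 <= q.

(* The denominator of the generating function of the recursion is, up to the
   factor nu{1} e^b, the Laplace exponent minus q:
   (1 - s)(1 - sum_k c_k s^k) = (phi(b) - q) e^{-b} / nu{1}  at s = e^{-b}. *)
Lemma denominator_phi (b : R) : b > 0 ->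
  up_jump nu * exp b * PSeries (denom_coef (scale_coef nu q)) (exp (- b))
  = laplace_exp nu b - q.
Proof.
  intros hb. set (s := exp (- b)).
  pose proof (exp_neg_unit b ltac:(lra)) as hs. fold s in hs.
  pose proof (up_jump_pos nu hnu) as hn1.
  assert (hser : is_series (fun n => denom_coef (scale_coef nu q) n * s ^ n)
     (1 - (1 + scale_coef nu q 1) * s + s / up_jump nu * PSeries down_gen s)).
  { apply is_series_decr_1, is_series_decr_1.
    match goal with |- is_series _ ?l =>
      replace l with (scal (s / up_jump nu) (PSeries down_gen s))
        by (simpl; unfold plus, opp, scal; simpl; unfold mult; simpl; ring) end.
    apply (is_series_ext (fun k => scal (s / up_jump nu) (down_jump nu k * s ^ (S k)))).
    - intros k. simpl denom_coef. unfold scale_coef. rewrite (nu_tail_succ nu hnu k).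
      unfold scal; simpl; unfold mult; simpl. field. lra.
    - apply (is_series_scal (K := R_AbsRing) (V := R_NormedModule)), down_gen_series, hs. }
  rewrite (is_pseries_unique _ _ _ (proj2 (is_pseries_R _ _ _) hser)).
  rewrite (laplace_exp_phi b) by lra. unfold phi. fold s.
  assert (hbs : exp b * s = 1) by (unfold s; rewrite <- exp_plus, Rplus_opp_r; apply exp_0).
  unfold scale_coef. rewrite nu_tail_1 by auto.
  replace (up_jump nu * exp b * (1 - (1 + (q + down_mass nu) / up_jump nu) * s
                                 + s / up_jump nu * PSeries down_gen s))
    with (up_jump nu * exp b - (up_jump nu + q + down_mass nu) * (exp b * s)
          + (exp b * s) * PSeries down_gen s) by (field; lra).
  rewrite hbs. ring.
Qed.

Lemma phi_large (b : R) : 1 + (q + down_mass nu) / up_jump nu <= b -> phi b > q.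
Proof.
  intros hb. pose proof (up_jump_pos nu hnu). pose proof (down_mass_nonneg nu hnu).
  assert (0 <= (q + down_mass nu) / up_jump nu) by (apply Rdiv_le_0_compat; lra).
  pose proof (phi_bounds b ltac:(lra)). pose proof (exp_ineq1_le b).
  assert (hgrow : up_jump nu * (exp b - 1) >= up_jump nu * (1 + (q + down_mass nu) / up_jump nu))
    by (apply Rle_ge, Rmult_le_compat_l; lra).
  replace (up_jump nu * (1 + (q + down_mass nu) / up_jump nu))
    with (up_jump nu + q + down_mass nu) in hgrow by (field; lra).
  lra.
Qed.

(* phi = q has a root in [0, oo): 0 if q = 0, otherwise by the
   intermediate value theorem. *)
Lemma phi_has_root : exists b, 0 <= b /\ phi b = q.
Proof.
  pose proof (up_jump_pos nu hnu) as hn1. pose proof (down_mass_nonneg nu hnu).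
  destruct (Req_dec q 0) as [->|hq0]; [exists 0; split; [lra|apply phi_0]|].
  (* phi(eps) < q for e^eps = 1 + q / (2 nu{1}), and phi is large further out *)
  set (eps := ln (1 + q / (2 * up_jump nu))).
  assert (hq2 : 0 < q / (2 * up_jump nu)) by (apply Rdiv_lt_0_compat; lra).
  assert (heps : 0 < eps) by (unfold eps; rewrite <- ln_1; apply ln_increasing; lra).
  assert (hexp : exp eps = 1 + q / (2 * up_jump nu)) by (apply exp_ln; lra).
  assert (hsmall : phi eps < q).
  { pose proof (phi_bounds eps ltac:(lra)) as hb. rewrite hexp in hb.
    replace (up_jump nu * (1 + q / (2 * up_jump nu) - 1)) with (q / 2) in hb by (field; lra).
    lra. }
  set (B := 1 + (q + down_mass nu) / up_jump nu).
  pose proof (phi_large B (Rle_refl B)) as hbig.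
  assert (heB : eps < B) by (destruct (Rlt_or_le eps B) as [|h]; [assumption|pose proof (phi_large eps h); lra]).
  destruct (Ranalysis5.IVT_interv (fun b => phi b - q) eps B) as [z [hz1 hz2]]; try lra.
  - intros x hx. apply continuity_pt_minus; [apply phi_continuous; lra|].
    apply continuity_pt_const. intros ? ?. reflexivity.
  - exists z. split; lra.
Qed.

Lemma Phi_exists : exists p, is_Phi nu q p.
Proof.
  destruct (largest_root phi q phi_continuous phi_has_root) as [p [hp0 [hpq hmax]]].
  - exists (1 + (q + down_mass nu) / up_jump nu). intros b hb hbq.
    destruct (Rlt_or_le b (1 + (q + down_mass nu) / up_jump nu)) as [|h]; [lra|].
    pose proof (phi_large b h). lra.
  - exists p. split; [exact hp0|]. rewrite laplace_exp_phi by exact hp0. split; [exact hpq|].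
    intros b hb hbq. rewrite laplace_exp_phi in hbq by exact hb. apply hmax; assumption.
Qed.

End LaplaceExponent.

Lemma exp_order_sub (f g : R -> R) (C1 a1 C2 a2 : R) :
  (forall x, 0 <= x -> Rabs (f x) <= C1 * exp (a1 * x)) ->
  (forall x, 0 <= x -> Rabs (g x) <= C2 * exp (a2 * x)) ->
  forall x, 0 <= x -> Rabs (f x - g x) <= (Rabs C1 + Rabs C2) * exp (Rmax a1 a2 * x).
Proof.
  intros hf hg x hx.
  assert (hup : forall C a, a <= Rmax a1 a2 -> C * exp (a * x) <= Rabs C * exp (Rmax a1 a2 * x)).
  { intros C a ha. apply Rle_trans with (Rabs C * exp (a * x)).
    - apply Rmult_le_compat_r; [left; apply exp_pos|apply Rle_abs].
    - apply Rmult_le_compat_l; [apply Rabs_pos|apply exp_le_mono, Rmult_le_compat_r; lra]. }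
  pose proof (hup C1 a1 (Rmax_l a1 a2)). pose proof (hup C2 a2 (Rmax_r a1 a2)).
  pose proof (hf x hx). pose proof (hg x hx).
  pose proof (Rabs_triang (f x) (- g x)) as htri. rewrite Rabs_Ropp in htri.
  unfold Rminus. lra.
Qed.

Lemma laplace_sub_vanishes (f g : R -> R) (b l : R) :
  improper_int_0_inf (fun x => exp (- b * x) * f x) l ->
  (forall T, 0 <= T -> ex_RInt (fun x => exp (- b * x) * g x) 0 T) ->
  (forall eps, eps > 0 -> exists M, forall T, T >= M ->
     Rabs (RInt (fun x => exp (- b * x) * g x) 0 T - l) < eps) ->
  (forall T, 0 <= T -> ex_RInt (fun x => exp (- b * x) * (f x - g x)) 0 T) /\
  forall eps, eps > 0 -> exists M, forall T, T >= M ->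
     Rabs (RInt (fun x => exp (- b * x) * (f x - g x)) 0 T) < eps.
Proof.
  intros [hfint hflim] hgint hglim.
  set (F := fun x => exp (- b * x) * f x). set (G := fun x => exp (- b * x) * g x).
  assert (hsub : forall T, 0 <= T ->
    is_RInt (fun x => exp (- b * x) * (f x - g x)) 0 T (RInt F 0 T - RInt G 0 T)).
  { intros T hT. destruct (hfint T hT) as [pr].
    apply (is_RInt_ext (fun x => minus (F x) (G x))).
    - intros x _. unfold F, G, minus, plus, opp; simpl. ring.
    - change (RInt F 0 T - RInt G 0 T) with (minus (RInt F 0 T) (RInt G 0 T)).
      apply (is_RInt_minus (V := R_NormedModule) F G); apply (RInt_correct (V := R_CompleteNormedModule));
        [apply ex_RInt_Reals_1; exact pr|apply hgint, hT]. }
  split; [intros T hT; eexists; exact (hsub T hT)|].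
  intros eps heps.
  destruct (hflim (eps / 2) ltac:(lra)) as [M1 hM1].
  destruct (hglim (eps / 2) ltac:(lra)) as [M2 hM2].
  exists (Rmax (Rmax M1 M2) 0). intros T hT.
  pose proof (Rmax_l (Rmax M1 M2) 0). pose proof (Rmax_r (Rmax M1 M2) 0).
  pose proof (Rmax_l M1 M2). pose proof (Rmax_r M1 M2).
  destruct (hfint T ltac:(lra)) as [pr].
  rewrite (is_RInt_unique _ _ _ _ (hsub T ltac:(lra))).
  unfold F. rewrite (RInt_Reals _ _ _ pr).
  pose proof (hM1 T pr ltac:(lra)) as h1. pose proof (hM2 T ltac:(lra)) as h2.
  fold G in h2 |- *.
  replace (RiemannInt pr - RInt G 0 T) with ((RiemannInt pr - l) + - (RInt G 0 T - l)) by ring.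
  pose proof (Rabs_triang (RiemannInt pr - l) (- (RInt G 0 T - l))) as htri.
  rewrite Rabs_Ropp in htri. lra.
Qed.

Lemma Rint_RInt (f : R -> R) (a b v : R) : is_RInt f a b v -> Rint f a b = v.
Proof.
  intros hv. set (pr := ex_RInt_Reals_0 _ _ _ (ex_intro _ v hv)).
  unfold Rint.
  destruct (epsilon_spec (inhabits 0)
              (fun v => exists pr : Riemann_integrable f a b, RiemannInt pr = v)
              (ex_intro _ (RiemannInt pr) (ex_intro _ pr eq_refl))) as [pr' hpr'].
  rewrite <- hpr', (RiemannInt_P5 pr' pr), <- (RInt_Reals _ _ _ pr).
  apply is_RInt_unique, hv.
Qed.

Lemma Rfloor_INR (m : nat) : Rfloor (INR m) = INR m.
Proof.
  unfold Rfloor. rewrite <- (tech_up (INR m) (Z.of_nat m + 1)).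
  - rewrite Z.add_simpl_r. symmetry. apply INR_IZR_INZ.
  - rewrite plus_IZR, <- INR_IZR_INZ. lra.
  - rewrite plus_IZR, <- INR_IZR_INZ. lra.
Qed.

Section ScaleFunction.
Variable nu : Z -> R.
Variable q : R.
Hypothesis hnu : skip_free_levy nu.
Hypothesis hq : 0 <= q.

Definition scale_seq : nat -> R := renewal (1 / up_jump nu) (scale_coef nu q).
Definition growth_rate : R := 1 + scale_coef nu q 1.

Lemma scale_start_nonneg : 0 <= 1 / up_jump nu.
Proof. apply Rdiv_le_0_compat; [lra|apply up_jump_pos, hnu]. Qed.

Lemma scale_seq_nonneg (n : nat) : 0 <= scale_seq n.
Proof. apply renewal_nonneg; [apply scale_start_nonneg|apply scale_coef_nonneg; auto]. Qed.

Lemma growth_rate_ge1 : 1 <= growth_rate.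
Proof. unfold growth_rate. pose proof (scale_coef_nonneg nu hnu q hq 1%nat ltac:(lia)). lra. Qed.

Lemma scale_seq_growth (x : R) : 0 <= x ->
  Rabs (scale_seq (fl x)) <= 1 / up_jump nu * exp (ln growth_rate * x).
Proof.
  intros hx. pose proof growth_rate_ge1 as hK. destruct (fl_spec x hx) as [hfl _].
  rewrite Rabs_right by (apply Rle_ge, scale_seq_nonneg).
  apply Rle_trans with (1 / up_jump nu * growth_rate ^ fl x).
  - apply renewal_bound; [apply scale_start_nonneg|apply scale_coef_nonneg|apply scale_coef_noninc]; auto.
  - apply Rmult_le_compat_l; [apply scale_start_nonneg|].
    replace (growth_rate ^ fl x) with (exp (ln growth_rate * INR (fl x))).
    + apply exp_le_mono, Rmult_le_compat_l; [|lra].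
      rewrite <- ln_1. destruct (Req_dec growth_rate 1) as [->|]; [lra|left; apply ln_increasing; lra].
    + replace (ln growth_rate * INR (fl x)) with (- (- ln growth_rate) * INR (fl x)) by ring.
      rewrite exp_INR, Ropp_involutive, exp_ln by lra. reflexivity.
Qed.

Lemma scale_seq_laplace (p b : R) : is_Phi nu q p -> b > Rmax p (ln growth_rate) ->
  infinite_sum (fun i => scale_seq i * exp (- b) ^ i) (PSeries scale_seq (exp (- b))) /\
  (1 - exp (- b)) / b * PSeries scale_seq (exp (- b))
  = (exp b - 1) / (b * (laplace_exp nu b - q)).
Proof.
  intros hp hb.
  pose proof (Rmax_l p (ln growth_rate)). pose proof (Rmax_r p (ln growth_rate)).
  assert (hb0 : b > 0) by (destruct hp as [hp0 _]; lra).
  set (s := exp (- b)). assert (hs0 : 0 < s) by apply exp_pos.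
  pose proof growth_rate_ge1 as hK.
  assert (hsK : s * growth_rate < 1).
  { unfold s. rewrite <- (exp_ln growth_rate), <- exp_plus, <- exp_0 by lra.
    apply exp_increasing. lra. }
  destruct (renewal_generating (1 / up_jump nu) (scale_coef nu q) scale_start_nonneg
              (scale_coef_nonneg nu hnu q hq) (scale_coef_noninc nu hnu q)
              s ltac:(lra) hsK) as [hser hprod].
  split; [apply is_series_Reals, is_pseries_R, hser|].
  pose proof (denominator_phi nu hnu q b hb0) as hden. fold s in hden.
  pose proof (up_jump_pos nu hnu). pose proof (exp_pos b).
  assert (hbs : exp b * s = 1) by (unfold s; rewrite <- exp_plus, Rplus_opp_r; apply exp_0).
  rewrite <- hden. fold scale_seq in hprod.
  set (P := PSeries (denom_coef (scale_coef nu q)) s) in *.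
  set (G := PSeries scale_seq s) in *.
  assert (hP : P <> 0) by (intros e; rewrite e in hprod; assert (0 < 1 / up_jump nu) by
                             (apply Rdiv_lt_0_compat; lra); lra).
  assert (hG : G = 1 / (up_jump nu * P))
    by (apply (Rmult_eq_reg_l P); [rewrite hprod; field; split; lra|exact hP]).
  rewrite hG.
  replace (exp b - 1) with (exp b * (1 - s)) by lra.
  field. repeat split; lra.
Qed.

Variable W : R -> R.
Hypothesis hW : is_scale_W nu q W.

(* W^{(q)} is the step function x |-> scale_seq (floor x) on [0, oo): both
   are right-continuous, piecewise constant and of exponential order, and
   they have the same Laplace transform for large b. *)
Lemma W_step (x : R) : 0 <= x -> W x = scale_seq (fl x).
Proof.
  destruct hW as [_ [_ [[hrc _] [[C [a hC]] hlap]]]].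
  destruct (Phi_exists nu hnu q hq) as [p hp].
  intros hx.
  enough (hD : W x - scale_seq (fl x) = 0) by lra.
  apply (laplace_uniqueness (fun x => W x - scale_seq (fl x))
           (Rabs C + Rabs (1 / up_jump nu)) (Rmax a (ln growth_rate)) (Rmax p (ln growth_rate)));
    [| |intros b hb|exact hx].
  - intros y hy. destruct (hrc y hy) as [d [hd hconst]]. destruct (fl_spec y hy).
    exists (Rmin d (INR (fl y) + 1 - y)). split; [apply Rmin_glb_lt; lra|].
    intros z hz. pose proof (Rmin_l d (INR (fl y) + 1 - y)). pose proof (Rmin_r d (INR (fl y) + 1 - y)).
    rewrite hconst, (fl_unique z (fl y)) by lra. reflexivity.
  - apply exp_order_sub; [exact hC|apply scale_seq_growth].
  - pose proof (Rmax_l p (ln growth_rate)).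
    assert (hb0 : b > 0) by (destruct hp as [hp0 _]; lra).
    destruct (scale_seq_laplace p b hp hb) as [hser hval].
    destruct (step_laplace scale_seq b _ hb0 scale_seq_nonneg hser) as [hint hlim].
    rewrite hval in hlim.
    apply (laplace_sub_vanishes W (fun x => scale_seq (fl x)) b _ (hlap p hp b ltac:(lra)) hint hlim).
Qed.

Lemma Zscale_nat (m : nat) :
  Zscale q W (INR m) - 1 = q * renewal_sum (1 / up_jump nu) (scale_coef nu q) m.
Proof.
  unfold Zscale. rewrite Rfloor_INR.
  rewrite (Rint_RInt W 0 (INR m) (renewal_sum (1 / up_jump nu) (scale_coef nu q) m)); [ring|].
  apply (is_RInt_ext (step_weighted scale_seq (fun _ => 1))).
  - intros y hy. rewrite Rmin_left in hy by apply pos_INR.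
    unfold step_weighted. rewrite W_step by lra. apply Rmult_1_l.
  - replace (renewal_sum (1 / up_jump nu) (scale_coef nu q) m)
      with (sum_range (fun k => scale_seq (k - 1)%nat * RInt (fun _ => 1) (INR (k - 1)) (INR k)) m).
    + apply step_integral_nat. intros; apply continuous_const.
    + induction m as [|m IH]; [reflexivity|].
      cbn [sum_range]. rewrite IH, (RInt_const (V := R_CompleteNormedModule)).
      replace (S m - 1)%nat with m by lia. rewrite S_INR.
      unfold scal; simpl; unfold mult; simpl. unfold scale_seq. ring.
Qed.

End ScaleFunction.

Lemma INR_succ_sub (n k : nat) : (k <= S n)%nat -> INR n + 1 - INR k = INR (S n - k).
Proof. intros h. rewrite minus_INR by exact h. rewrite S_INR. ring. Qed.

Theorem corollary3p4 (nu : Z -> R) (q : R) (W : R -> R)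
  (hnu : skip_free_levy nu) (hq : 0 <= q) (hW : is_scale_W nu q W) :
  let Zt := fun x => Zscale q W x - 1 in
  W 0 = 1 / nu 1%Z /\
  (forall n : nat,
     W (INR n + 1) = W 0 + sum_range (fun k =>
        W (INR n + 1 - INR k) * ((q + nu_tail nu k) / nu 1%Z)) (S n)) /\
  Zt 0 = 0 /\
  (forall n : nat,
     Zt (INR n + 1) = (INR n + 1) * (q / nu 1%Z) + sum_range (fun k =>
        Zt (INR n + 1 - INR k) * ((q + nu_tail nu k) / nu 1%Z)) n).
Proof.
  cbv beta zeta.
  (* on the integers W^{(q)} and Z^{(q)} - 1 are scale_seq and q times its
     partial sums *)
  assert (hWnat : forall m : nat, W (INR m) = scale_seq nu q m).
  { intros m. rewrite (W_step nu q hnu hq W hW) by apply pos_INR. rewrite (fl_unique _ m) by lra. reflexivity. }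
  assert (hW0 : W 0 = 1 / nu 1%Z) by exact (hWnat 0%nat).
  pose proof (Zscale_nat nu q hnu hq W hW) as hZnat.
  pose proof (up_jump_pos nu hnu) as hn1. unfold up_jump in hn1.
  split; [exact hW0|]. split; [|split].
  - intros n. rewrite <- S_INR at 1. rewrite hWnat, hW0. unfold scale_seq. rewrite renewal_rec.
    f_equal. apply sum_range_ext_in. intros k hk.
    rewrite INR_succ_sub, hWnat by lia. reflexivity.
  - pose proof (hZnat 0%nat) as h0. simpl in h0. lra.
  - intros n. rewrite <- S_INR at 1. rewrite hZnat, renewal_sum_rec, S_INR.
    rewrite (sum_range_ext_in
      (fun k => (Zscale q W (INR n + 1 - INR k) - 1) * ((q + nu_tail nu k) / nu 1%Z))
      (fun k => q * (renewal_sum (1 / up_jump nu) (scale_coef nu q) (S n - k) * scale_coef nu q k))).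
    + rewrite sum_range_scal. unfold up_jump. field. lra.
    + intros k hk. rewrite INR_succ_sub, hZnat by lia. unfold scale_coef, up_jump. ring.
Qed.
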